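(* Let $\alpha=(\sqrt5-1)/2$. Define $\varepsilon_1(n)=1$ if $n=F_{2k}-1$ for some $k\ge1$ and $\varepsilon_1(n)=0$ otherwise; define $\varepsilon_2(n)=1$ if $n=F_{2k+1}-1$ for some $k\ge1$ and $\varepsilon_2(n)=0$ otherwise. Then for all $n\ge0$, $$a(n)=\lfloor (n+1)\alpha\rfloor+\varepsilon_1(n),\qquad b(n)=\lfloor (n+1)\alpha\rfloor-\varepsilon_2(n).$$
   Context: $\mathbb{N}=\{0,1,2,\dots\}$. Fibonacci numbers: $F_0=0$, $F_1=1$, $F_k=F_{k-1}+F_{k-2}$. Hofstadter's ''married'' sequences $a,b:\mathbb{N}\to\mathbb{N}$ are defined by $a(0)=1$, $b(0)=0$ and, for $n\ge1$, $b(n)=n-a(b(n-1))$ and $a(n)=n-b(a(n-1))$ (computing $b(n)$ before $a(n)$ at each step). First values: $a=1,1,2,2,3,3,4,5,5,6,6,\dots$, $b=0,0,1,2,2,3,4,4,5,6,6,\dots$. *)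

From Stdlib Require Import Reals Lia List Arith.
Open Scope R_scope.

Fixpoint fib (k : nat) : nat :=
  match k with
  | O => 0
  | S k' => match k' with
            | O => 1
            | S k'' => (fib k' + fib k'')%nat
            end
  end.

(* hist n = [(a n, b n); (a (n-1), b (n-1)); ...; (a 0, b 0)] (newest first) *)
Definition lookA (h : list (nat * nat)) (i : nat) : nat :=
  fst (nth (length h - 1 - i)%nat h (0%nat, 0%nat)).
Definition lookB (h : list (nat * nat)) (i : nat) : nat :=
  snd (nth (length h - 1 - i)%nat h (0%nat, 0%nat)).

Fixpoint hist (n : nat) : list (nat * nat) :=
  match n with
  | O => (1%nat, 0%nat) :: nil
  | S m =>
      let h := hist m in
      (* b(n) = n - a(b(n-1)), then a(n) = n - b(a(n-1)), with b(n) now known *)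
      let bn := (n - lookA h (lookB h m))%nat in
      let an := (n - (if Nat.eqb (lookA h m) n then bn else lookB h (lookA h m)))%nat in
      (an, bn) :: h
  end.

Definition hof_a (n : nat) : nat := fst (hd (0%nat, 0%nat) (hist n)).
Definition hof_b (n : nat) : nat := snd (hd (0%nat, 0%nat) (hist n)).

Example hof_a_vals : map hof_a (seq 0 11) = (1::1::2::2::3::3::4::5::5::6::6::nil)%nat.
Proof. reflexivity. Qed.
Example hof_b_vals : map hof_b (seq 0 11) = (0::0::1::2::2::3::4::4::5::6::6::nil)%nat.
Proof. reflexivity. Qed.

Definition alpha : R := (sqrt 5 - 1) / 2.

From Stdlib Require Import ClassicalDescription ZArith.

Definition hof_eps1 (n : nat) : Z :=
  if excluded_middle_informative (exists k, (1 <= k)%nat /\ n = (fib (2 * k) - 1)%nat)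
  then 1%Z else 0%Z.
Definition hof_eps2 (n : nat) : Z :=
  if excluded_middle_informative (exists k, (1 <= k)%nat /\ n = (fib (2 * k + 1) - 1)%nat)
  then 1%Z else 0%Z.

(* Write G(n) = floor((n+1) alpha) with alpha = (sqrt 5 - 1)/2 (the "golden floor").  The proof has four parts.
   1. Uniqueness: hof_a and hof_b (computed through the history list [hist]) are the
      only sequences with a(0) = 1, b(0) = 0, b(n+1) = n+1 - a(b(n)) and
      a(n+1) = n+1 - b(a(n)).
   2. The golden floor: strict bounds (alpha is irrational) and Hofstadter's
      recurrence G(n+1) + G(G(n)) = n+1, from alpha^2 = 1 - alpha.
   3. Fibonacci approximations F_(k+1) alpha - F_k = (-1)^k alpha^(k+1), which
      determine G at and just below Fibonacci numbers.
   4. Markers: the Fibonacci corrections are carried along G ("marker transfer"),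
      so G + eps1 and G - eps2 satisfy the married recurrences; by part 1 they are
      a and b. *)

From Stdlib Require Import Reals ZArith Lia Lra Psatz List ClassicalDescription.
Open Scope R_scope.
Open Scope list_scope.

Lemma hist_length m : length (hist m) = S m.
Proof. induction m; simpl; auto. Qed.

Lemma hist_S m : hist (S m) =
  ((S m - (if Nat.eqb (lookA (hist m) m) (S m)
           then S m - lookA (hist m) (lookB (hist m) m)
           else lookB (hist m) (lookA (hist m) m)))%nat,
   (S m - lookA (hist m) (lookB (hist m) m))%nat) :: hist m.
Proof. reflexivity. Qed.

Lemma nth_hist m i : (i <= m)%nat ->
  nth (m - i) (hist m) (0%nat, 0%nat) = hd (0%nat, 0%nat) (hist i).
Proof.
  revert i; induction m as [|m IH]; intros i Hi.
  - replace i with 0%nat by lia. reflexivity.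
  - destruct (Nat.eq_dec i (S m)) as [->|Hne].
    + rewrite Nat.sub_diag. reflexivity.
    + replace (S m - i)%nat with (S (m - i)) by lia.
      rewrite hist_S. apply IH. lia.
Qed.

Lemma lookA_hist m i : (i <= m)%nat -> lookA (hist m) i = hof_a i.
Proof.
  intros Hi. unfold lookA, hof_a. rewrite hist_length.
  replace (S m - 1 - i)%nat with (m - i)%nat by lia. now rewrite nth_hist.
Qed.

Lemma lookB_hist m i : (i <= m)%nat -> lookB (hist m) i = hof_b i.
Proof.
  intros Hi. unfold lookB, hof_b. rewrite hist_length.
  replace (S m - 1 - i)%nat with (m - i)%nat by lia. now rewrite nth_hist.
Qed.

(* The recurrence for b, valid as soon as b(m) is an already computed index. *)
Lemma hof_b_S m : (hof_b m <= m)%nat -> hof_b (S m) = (S m - hof_a (hof_b m))%nat.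
Proof.
  intros Hb. unfold hof_b at 1. rewrite hist_S. cbn [hd snd].
  rewrite (lookB_hist m m), lookA_hist by lia. reflexivity.
Qed.

(* The recurrence for a; the index a(m) may be m+1, where b was just computed. *)
Lemma hof_a_S m : (hof_a m <= S m)%nat -> hof_a (S m) = (S m - hof_b (hof_a m))%nat.
Proof.
  intros Ha. unfold hof_a at 1. rewrite hist_S. cbn [hd fst].
  rewrite (lookA_hist m m) by lia.
  destruct (Nat.eqb_spec (hof_a m) (S m)) as [E|E].
  - rewrite E. unfold hof_b. rewrite hist_S. reflexivity.
  - rewrite lookB_hist by lia. reflexivity.
Qed.

(* Any solution of the married recurrences is (hof_a, hof_b); the bounds B n <= n
   and A n <= n+1 needed to unfold [hist] follow from the recurrences themselves. *)
Lemma married_unique (A B : nat -> nat) :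
  A 0%nat = 1%nat -> B 0%nat = 0%nat ->
  (forall n, B (S n) = S n - A (B n))%nat ->
  (forall n, A (S n) = S n - B (A n))%nat ->
  forall n, hof_a n = A n /\ hof_b n = B n.
Proof.
  intros HA0 HB0 HB HA.
  assert (B_le : forall n, (B n <= n)%nat) by (intros [|n]; [rewrite HB0|rewrite HB]; lia).
  assert (A_le : forall n, (A n <= S n)%nat) by (intros [|n]; [rewrite HA0|rewrite HA]; lia).
  enough (H : forall n i, (i <= n)%nat -> hof_a i = A i /\ hof_b i = B i)
    by (intros n; apply (H n); lia).
  induction n as [|n IH]; intros i Hi.
  - replace i with 0%nat by lia. rewrite HA0, HB0. split; reflexivity.
  - destruct (Nat.eq_dec i (S n)) as [->|Hne]; [|apply IH; lia].
    destruct (IH n (le_n n)) as [Ha Hb].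
    assert (HbS : hof_b (S n) = B (S n)).
    { rewrite hof_b_S by (rewrite Hb; apply B_le).
      rewrite HB, Hb. f_equal. apply IH, B_le. }
    split; [|exact HbS].
    rewrite hof_a_S by (rewrite Ha; apply A_le).
    rewrite HA, Ha. f_equal.
    destruct (Nat.eq_dec (A n) (S n)) as [E|E].
    + rewrite E. exact HbS.
    + apply IH. pose proof (A_le n). lia.
Qed.

Lemma alpha_sq : alpha * alpha = 1 - alpha.
Proof. unfold alpha. pose proof (sqrt_sqrt 5 ltac:(lra)). nra. Qed.

Lemma alpha_bounds : 0.6 < alpha < 0.65.
Proof.
  unfold alpha. pose proof (sqrt_sqrt 5 ltac:(lra)). pose proof (sqrt_pos 5).
  assert (2.2 < sqrt 5 < 2.3) by (split; nra). lra.
Qed.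

(* q^2 + qN = N^2 has no solution with N > 0: a solution with q > 0 yields the
   smaller solution (N - q, q), so infinite descent applies. *)
Lemma no_golden_pair N q : (q * q + q * N = N * N)%nat -> N = 0%nat.
Proof.
  revert q; induction N as [N IH] using (well_founded_induction lt_wf); intros q H.
  destruct (Nat.eq_dec q 0) as [->|Hq]; [nia|].
  assert (HqN : (q < N)%nat) by nia.
  assert (q = 0%nat); [|lia].
  apply (IH q HqN (N - q)%nat).
  replace N with (q + (N - q))%nat in H by lia. nia.
Qed.

(* alpha is irrational: N alpha = q would give (2q + N)^2 = 5 N^2. *)
Lemma alpha_irrational N q : (1 <= N)%nat -> INR N * alpha <> INR q.
Proof.
  intros HN E. unfold alpha in E.
  assert (E' : INR N * sqrt 5 = 2 * INR q + INR N) by lra.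
  assert (Hsq : INR (5 * N * N) = INR ((2 * q + N) * (2 * q + N))).
  { rewrite !mult_INR, !plus_INR, !mult_INR. cbn [INR].
    pose proof (sqrt_sqrt 5 ltac:(lra)).
    assert (INR N * sqrt 5 * (INR N * sqrt 5) = (2 * INR q + INR N) * (2 * INR q + INR N))
      by (rewrite E'; ring).
    nra. }
  apply INR_eq in Hsq.
  assert (N = 0%nat) by (apply (no_golden_pair N q); nia). lia.
Qed.

Lemma nat_le_of_lt_succ a b : INR a < INR b + 1 -> (a <= b)%nat.
Proof. intros H. rewrite <- S_INR in H. apply INR_lt in H. lia. Qed.

Lemma nat_lt_of_mul_alpha u v : INR u * alpha < INR v * alpha -> (u < v)%nat.
Proof.
  intros H. apply INR_lt. pose proof alpha_bounds as Halpha.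
  apply (Rmult_lt_reg_r alpha); lra.
Qed.

Definition gfloor (n : nat) : nat := Z.to_nat (Int_part ((INR n + 1) * alpha)).

Lemma Int_part_gfloor n : Int_part ((INR n + 1) * alpha) = Z.of_nat (gfloor n).
Proof.
  unfold gfloor. rewrite Z2Nat.id; [reflexivity|].
  destruct (base_Int_part ((INR n + 1) * alpha)) as [_ Hfloor].
  pose proof (pos_INR n). pose proof alpha_bounds.
  assert (Hneg : -1 < IZR (Int_part ((INR n + 1) * alpha))) by nra.
  apply lt_IZR in Hneg. lia.
Qed.

(* Both bounds are strict, by irrationality of alpha. *)
Lemma gfloor_bounds n : INR (gfloor n) < (INR n + 1) * alpha < INR (gfloor n) + 1.
Proof.
  destruct (base_Int_part ((INR n + 1) * alpha)) as [Hle Hlt].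
  rewrite Int_part_gfloor, <- INR_IZR_INZ in Hle, Hlt.
  split; [|lra].
  destruct Hle as [Hlt'|Heq]; [exact Hlt'|].
  exfalso. apply (alpha_irrational (S n) (gfloor n)); [lia|].
  rewrite S_INR. lra.
Qed.

Lemma gfloor_char n m : INR m <= (INR n + 1) * alpha < INR m + 1 -> gfloor n = m.
Proof.
  intros Hm. unfold gfloor.
  rewrite <- (Int_part_spec ((INR n + 1) * alpha) (Z.of_nat m)), Nat2Z.id; [reflexivity|].
  rewrite <- INR_IZR_INZ. lra.
Qed.

(* Variant of [gfloor_char] determining G(n) + 1, which avoids truncated subtraction. *)
Lemma gfloor_char_pred n m :
  INR m <= (INR n + 1) * alpha + 1 < INR m + 1 -> (gfloor n + 1 = m)%nat.
Proof.
  intros Hm. pose proof (gfloor_bounds n).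
  assert (gfloor n + 1 <= m)%nat by (apply nat_le_of_lt_succ; rewrite plus_INR; simpl; lra).
  assert (m <= gfloor n + 1)%nat by (apply nat_le_of_lt_succ; rewrite plus_INR; simpl; lra).
  lia.
Qed.

Lemma gfloor_0 : gfloor 0 = 0%nat.
Proof. apply gfloor_char. pose proof alpha_bounds. simpl. lra. Qed.

Lemma gfloor_le n : (gfloor n <= n)%nat.
Proof.
  apply nat_le_of_lt_succ.
  pose proof (gfloor_bounds n). pose proof alpha_bounds. pose proof (pos_INR n). nra.
Qed.

Lemma gfloor_pos n : (1 <= n)%nat -> (1 <= gfloor n)%nat.
Proof.
  intros Hn. apply le_INR in Hn. pose proof (gfloor_bounds n). pose proof alpha_bounds.
  assert (1 < INR (gfloor n) + 1) by (simpl in Hn; nra).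
  apply nat_le_of_lt_succ. simpl. lra.
Qed.

(* Since 0 < alpha < 1, G increases by 0 or 1 at each step. *)
Lemma gfloor_succ n : gfloor (S n) = gfloor n \/ gfloor (S n) = S (gfloor n).
Proof.
  pose proof (gfloor_bounds n). pose proof (gfloor_bounds (S n)). pose proof alpha_bounds.
  rewrite S_INR in *.
  assert (gfloor n <= gfloor (S n))%nat by (apply nat_le_of_lt_succ; lra).
  assert (gfloor (S n) <= S (gfloor n))%nat by (apply nat_le_of_lt_succ; rewrite S_INR; lra).
  lia.
Qed.

(* Hofstadter's G-recurrence: multiplying the bounds on N alpha (N = n + 1) by alpha
   and using alpha^2 = 1 - alpha locates (G(n) + 1) alpha, whose floor is
   N - G(n) or N - G(n) - 1 according to whether G(n+1) = G(n) or G(n) + 1. *)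
Lemma gfloor_rec n : (gfloor (S n) + gfloor (gfloor n) = S n)%nat.
Proof.
  pose proof (gfloor_le n) as Hle.
  pose proof (gfloor_bounds n) as Hn. pose proof (gfloor_bounds (S n)) as HSn.
  pose proof alpha_bounds. pose proof alpha_sq. rewrite S_INR in HSn.
  assert (HNa : (INR n + 1) * alpha * alpha = (INR n + 1) - (INR n + 1) * alpha)
    by (rewrite Rmult_assoc, alpha_sq; ring).
  destruct (gfloor_succ n) as [Hd|Hd]; rewrite Hd in HSn |- *;
    set (m := gfloor n) in *; set (N := INR n + 1) in *.
  - enough (gfloor m = S n - m)%nat by lia.
    apply gfloor_char. rewrite minus_INR, S_INR by lia. fold N.
    assert (INR m * alpha < N * alpha * alpha) by (apply Rmult_lt_compat_r; lra).
    assert ((N * alpha + alpha - 1) * alpha < INR m * alpha)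
      by (apply Rmult_lt_compat_r; lra).
    nra.
  - enough (gfloor m = n - m)%nat by lia.
    apply gfloor_char. rewrite minus_INR by lia. rewrite S_INR in HSn.
    replace (INR n) with (N - 1) by (unfold N; ring).
    assert ((N * alpha - 1) * alpha < INR m * alpha) by (apply Rmult_lt_compat_r; lra).
    assert (INR m * alpha < (N * alpha + alpha - 1) * alpha)
      by (apply Rmult_lt_compat_r; lra).
    nra.
Qed.

(* The Fibonacci recurrence, in a form that accepts arbitrary index expressions. *)
Lemma fib_sum k l m : (k + 1 = l)%nat -> (l + 1 = m)%nat -> fib m = (fib l + fib k)%nat.
Proof. intros <- <-. rewrite !Nat.add_1_r. reflexivity. Qed.

Lemma fib_mono k l : (k <= l)%nat -> (fib k <= fib l)%nat.
Proof.
  induction 1 as [|l _ IH]; [lia|].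
  destruct l as [|l]; [simpl in *; lia|].
  rewrite (fib_sum l (S l) (S (S l))) by lia. lia.
Qed.

Lemma fib_pos k : (1 <= k)%nat -> (1 <= fib k)%nat.
Proof. intros Hk. exact (fib_mono 1 k Hk). Qed.

Lemma fib_ge_2 k : (3 <= k)%nat -> (2 <= fib k)%nat.
Proof. intros Hk. exact (fib_mono 3 k Hk). Qed.

(* Beyond F_2, a Fibonacci number plus one is a Fibonacci number only for the next
   index (F_2 + 1 = F_3, F_3 + 1 = F_4); in particular not for one of equal parity. *)
Lemma fib_succ_gap k l : (2 <= k)%nat -> (fib k + 1 = fib l)%nat -> l = S k.
Proof.
  intros Hk E.
  destruct (le_lt_dec l k) as [Hl|Hl]; [pose proof (fib_mono l k Hl); lia|].
  destruct (Nat.eq_dec l (S k)) as [|Hne]; [assumption|exfalso].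
  pose proof (fib_mono (S (S k)) l ltac:(lia)) as Hgrow.
  rewrite (fib_sum k (S k) (S (S k))) in Hgrow by lia.
  pose proof (fib_ge_2 (S k) ltac:(lia)). lia.
Qed.

Lemma alpha_pow_le m k : (m <= k)%nat -> 0 < alpha ^ k <= alpha ^ m.
Proof.
  intros Hmk. pose proof alpha_bounds.
  split; [apply pow_lt; lra|].
  replace k with (m + (k - m))%nat by lia. rewrite pow_add.
  assert (alpha ^ (k - m) <= 1) by (rewrite <- (pow1 (k - m)); apply pow_incr; lra).
  pose proof (pow_lt alpha m ltac:(lra)). nra.
Qed.

(* F_(k+1) alpha - F_k = (-1)^k alpha^(k+1): both sides satisfy the Fibonacci
   recurrence, the right side because alpha^2 = 1 - alpha. *)
Lemma fib_alpha k :
  INR (fib (S k)) * alpha - INR (fib k) = (-1) ^ k * alpha ^ (S k).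
Proof.
  enough (H : forall k, INR (fib (S k)) * alpha - INR (fib k) = (-1) ^ k * alpha ^ (S k) /\
    INR (fib (S (S k))) * alpha - INR (fib (S k)) = (-1) ^ (S k) * alpha ^ (S (S k)))
    by apply H.
  clear k; pose proof alpha_sq as Hsq.
  induction k as [|k [IH IHS]]; [simpl; nra|].
  split; [exact IHS|].
  change (fib (S (S (S k)))) with (fib (S (S k)) + fib (S k))%nat.
  change (fib (S (S k))) with (fib (S k) + fib k)%nat in *.
  rewrite !plus_INR in *. cbn [pow] in *.
  set (s := (-1) ^ k) in *. set (p := alpha ^ k) in *.
  assert (s * p * (alpha * alpha) = s * p * (1 - alpha)) by (rewrite Hsq; ring).
  nra.
Qed.

(* Odd-indexed Fibonacci numbers overshoot: F_(2i+3) alpha exceeds F_(2i+2) by at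
   most alpha^3 = 2 alpha - 1. *)
Lemma fib_odd_alpha i : exists e,
  INR (fib (2*i+3)) * alpha = INR (fib (2*i+2)) + e /\ 0 < e <= 2 * alpha - 1.
Proof.
  exists (alpha ^ (2*i+3)). pose proof (fib_alpha (2*i+2)) as H.
  replace (S (2*i+2)) with (2*i+3)%nat in H by lia.
  replace (2*i+2)%nat with (2*(i+1))%nat in H at 2 by lia. rewrite pow_1_even in H.
  split; [lra|].
  replace (2 * alpha - 1) with (alpha ^ 3) by (cbn [pow]; pose proof alpha_sq; nra).
  apply alpha_pow_le. lia.
Qed.

(* Even-indexed Fibonacci numbers undershoot: F_(2j+2) alpha falls short of
   F_(2j+1) by at most alpha^2 = 1 - alpha. *)
Lemma fib_even_alpha j : exists e,
  INR (fib (2*j+2)) * alpha = INR (fib (2*j+1)) - e /\ 0 < e <= 1 - alpha.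
Proof.
  exists (alpha ^ (2*j+2)). pose proof (fib_alpha (2*j+1)) as H.
  replace (S (2*j+1)) with (2*j+2)%nat in H by lia.
  replace (2*j+1)%nat with (S (2*j)) in H at 2 by lia. rewrite pow_1_odd in H.
  split; [lra|].
  replace (1 - alpha) with (alpha ^ 2) by (cbn [pow]; pose proof alpha_sq; nra).
  apply alpha_pow_le. lia.
Qed.

Ltac nat_eq_to_R H := apply (f_equal INR) in H; rewrite ?plus_INR in H; cbn [INR] in H.

Lemma gfloor_below_fib_odd i x : (x + 1 = fib (2*i+3))%nat -> gfloor x = fib (2*i+2).
Proof.
  intros H. nat_eq_to_R H. destruct (fib_odd_alpha i) as [e [He Hb]].
  pose proof alpha_bounds as Halpha. apply gfloor_char. rewrite H. lra.
Qed.

Lemma gfloor_fib_odd i : gfloor (fib (2*i+3)) = fib (2*i+2).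
Proof.
  destruct (fib_odd_alpha i) as [e [He Hb]].
  pose proof alpha_bounds as Halpha. apply gfloor_char. nra.
Qed.

Lemma gfloor_below_fib_even j x :
  (x + 1 = fib (2*j+2))%nat -> (gfloor x + 1 = fib (2*j+1))%nat.
Proof.
  intros H. nat_eq_to_R H. destruct (fib_even_alpha j) as [e [He Hb]].
  pose proof alpha_bounds as Halpha. apply gfloor_char_pred. rewrite H. lra.
Qed.

Lemma gfloor_fib_even j : gfloor (fib (2*j+2)) = fib (2*j+1).
Proof.
  destruct (fib_even_alpha j) as [e [He Hb]].
  pose proof alpha_bounds as Halpha. apply gfloor_char. nra.
Qed.

Lemma gfloor_pred_fib_even i x :
  (gfloor x + 1 = fib (2*i+2))%nat <-> (x + 2 = fib (2*i+3))%nat.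
Proof.
  destruct (fib_odd_alpha i) as [e [He Hb]]. pose proof alpha_bounds as Halpha.
  split; intros H; nat_eq_to_R H.
  - pose proof (gfloor_bounds x).
    assert (x + 1 < fib (2*i+3))%nat
      by (apply nat_lt_of_mul_alpha; rewrite plus_INR; cbn [INR]; nra).
    assert (fib (2*i+3) < x + 3)%nat
      by (apply nat_lt_of_mul_alpha; rewrite plus_INR; cbn [INR]; nra).
    lia.
  - apply gfloor_char_pred.
    replace (INR x + 1) with (INR (fib (2*i+3)) - 1) by lra. nra.
Qed.

Lemma gfloor_pred_fib_odd i x :
  (gfloor x + 1 = fib (2*i+3))%nat <->
  (x + 1 = fib (2*i+4))%nat \/ (x + 2 = fib (2*i+4))%nat.
Proof.
  destruct (fib_even_alpha (S i)) as [e [He Hb]].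
  replace (2 * S i + 2)%nat with (2*i+4)%nat in He by lia.
  replace (2 * S i + 1)%nat with (2*i+3)%nat in He by lia.
  pose proof alpha_bounds as Halpha.
  split.
  - intros H. nat_eq_to_R H. pose proof (gfloor_bounds x).
    assert (x + 1 < fib (2*i+4) + 1)%nat
      by (apply nat_lt_of_mul_alpha; rewrite !plus_INR; cbn [INR]; nra).
    assert (fib (2*i+4) < x + 3)%nat
      by (apply nat_lt_of_mul_alpha; rewrite plus_INR; cbn [INR]; nra).
    lia.
  - intros [H|H]; nat_eq_to_R H; apply gfloor_char_pred.
    + rewrite H. lra.
    + replace (INR x + 1) with (INR (fib (2*i+4)) - 1) by lra. nra.
Qed.

Definition ind (P : Prop) : nat :=
  if excluded_middle_informative P then 1%nat else 0%nat.

Lemma ind_true (P : Prop) : P -> ind P = 1%nat.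
Proof. unfold ind. destruct excluded_middle_informative; tauto. Qed.

Lemma ind_false (P : Prop) : ~ P -> ind P = 0%nat.
Proof. unfold ind. destruct excluded_middle_informative; tauto. Qed.

Lemma ind_iff (P Q : Prop) : (P <-> Q) -> ind P = ind Q.
Proof.
  intros HPQ. destruct (classic P) as [HP|HP].
  - rewrite !ind_true; tauto.
  - rewrite !ind_false; tauto.
Qed.

Definition at_even_fib (n : nat) : Prop := exists j, (n + 1 = fib (2*j+2))%nat.

Definition at_odd_fib (n : nat) : Prop := exists i, (n + 1 = fib (2*i+3))%nat.

Lemma hof_eps1_ind n : hof_eps1 n = Z.of_nat (ind (at_even_fib n)).
Proof.
  unfold hof_eps1. destruct excluded_middle_informative as [[k [Hk Hn]]|Hn].
  - rewrite ind_true; [reflexivity|]. exists (k - 1)%nat.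
    replace (2 * (k - 1) + 2)%nat with (2 * k)%nat by lia.
    pose proof (fib_pos (2 * k) ltac:(lia)). lia.
  - rewrite ind_false; [reflexivity|]. intros [j Hj]. apply Hn.
    exists (S j). split; [lia|]. replace (2 * S j)%nat with (2*j+2)%nat by lia. lia.
Qed.

Lemma hof_eps2_ind n : hof_eps2 n = Z.of_nat (ind (at_odd_fib n)).
Proof.
  unfold hof_eps2. destruct excluded_middle_informative as [[k [Hk Hn]]|Hn].
  - rewrite ind_true; [reflexivity|]. exists (k - 1)%nat.
    replace (2 * (k - 1) + 3)%nat with (2 * k + 1)%nat by lia.
    pose proof (fib_pos (2 * k + 1) ltac:(lia)). lia.
  - rewrite ind_false; [reflexivity|]. intros [i Hi]. apply Hn.
    exists (S i). split; [lia|]. replace (2 * S i + 1)%nat with (2*i+3)%nat by lia. lia.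
Qed.

Lemma not_at_odd_fib_odd i : ~ at_odd_fib (fib (2*i+3)).
Proof. intros [i' H]. apply fib_succ_gap in H; lia. Qed.

Lemma not_at_even_fib_even j : ~ at_even_fib (fib (2*j+2)).
Proof. intros [j' H]. apply fib_succ_gap in H; lia. Qed.

(* The correction eps2 never makes G - eps2 truncate. *)
Lemma ind_odd_le_gfloor n : (ind (at_odd_fib n) <= gfloor n)%nat.
Proof.
  destruct (classic (at_odd_fib n)) as [[i Hi]|Hn]; [|rewrite (ind_false _ Hn); lia].
  rewrite ind_true by (exists i; exact Hi). apply gfloor_pos.
  pose proof (fib_ge_2 (2*i+3) ltac:(lia)). lia.
Qed.

Lemma even_marker_transfer n : at_even_fib (gfloor n) <-> at_odd_fib (S n).
Proof.
  split; intros [i Hi]; exists i.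
  - apply gfloor_pred_fib_even in Hi. lia.
  - apply gfloor_pred_fib_even. lia.
Qed.

Lemma odd_marker_transfer n :
  ~ at_even_fib n -> (at_odd_fib (gfloor n) <-> at_even_fib (S n)).
Proof.
  intros Hn. split.
  - intros [i Hi]. apply gfloor_pred_fib_odd in Hi as [Hi|Hi].
    + exfalso. apply Hn. exists (S i). rewrite Hi. f_equal. lia.
    + exists (S i). replace (2 * S i + 2)%nat with (2*i+4)%nat by lia. lia.
  - intros [[|i] Hi]; [simpl in Hi; lia|].
    exists i. apply gfloor_pred_fib_odd. right.
    replace (2 * S i + 2)%nat with (2*i+4)%nat in Hi by lia. lia.
Qed.

Definition a_formula (n : nat) : nat := (gfloor n + ind (at_even_fib n))%nat.
Definition b_formula (n : nat) : nat := (gfloor n - ind (at_odd_fib n))%nat.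

Lemma a_formula_0 : a_formula 0 = 1%nat.
Proof.
  unfold a_formula. rewrite gfloor_0, ind_true; [reflexivity|].
  exists 0%nat. reflexivity.
Qed.

Lemma b_formula_0 : b_formula 0 = 0%nat.
Proof. unfold b_formula. rewrite gfloor_0. reflexivity. Qed.

(* b is F_(2j) at F_(2j+1); for j = 0 the correction eps2(1) = 1 is needed. *)
Lemma b_formula_fib_odd j : b_formula (fib (2*j+1)) = fib (2*j).
Proof.
  unfold b_formula. destruct j as [|i].
  - assert (Hg1 : gfloor 1 = 1%nat)
      by (apply gfloor_char; pose proof alpha_bounds; simpl; lra).
    simpl. rewrite Hg1, ind_true; [reflexivity|]. exists 0%nat. reflexivity.
  - replace (2 * S i + 1)%nat with (2*i+3)%nat by lia.
    replace (2 * S i)%nat with (2*i+2)%nat by lia.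
    rewrite gfloor_fib_odd, ind_false by apply not_at_odd_fib_odd. lia.
Qed.

(* The closed forms satisfy the recurrence for b: at n + 1 = F_(2i+3) by the
   explicit Fibonacci values, elsewhere by Hofstadter's recurrence and marker
   transfer. *)
Lemma b_formula_rec n : b_formula (S n) = (S n - a_formula (b_formula n))%nat.
Proof.
  destruct (classic (at_odd_fib n)) as [[i Hn]|Hn].
  - assert (Hg : gfloor n = fib (2*i+2)) by (apply gfloor_below_fib_odd; exact Hn).
    assert (Hb : (b_formula n + 1 = fib (2*i+2))%nat).
    { unfold b_formula. rewrite Hg, ind_true by (exists i; exact Hn).
      pose proof (fib_pos (2*i+2) ltac:(lia)). lia. }
    assert (Hab : a_formula (b_formula n) = fib (2*i+1)).
    { unfold a_formula. rewrite ind_true by (exists i; exact Hb).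
      apply gfloor_below_fib_even in Hb. lia. }
    assert (HbS : b_formula (S n) = fib (2*i+2)).
    { unfold b_formula. replace (S n) with (fib (2*i+3)) by lia.
      rewrite gfloor_fib_odd, ind_false by apply not_at_odd_fib_odd. lia. }
    rewrite Hab, HbS, (fib_sum (2*i+1) (2*i+2) (2*i+3)) in * by lia. lia.
  - unfold b_formula at 2. rewrite (ind_false _ Hn), Nat.sub_0_r.
    unfold a_formula, b_formula.
    rewrite (ind_iff _ _ (even_marker_transfer n)).
    pose proof (gfloor_rec n). lia.
Qed.

(* The closed forms satisfy the recurrence for a: at n + 1 = F_(2j+2) by the
   explicit Fibonacci values, elsewhere by Hofstadter's recurrence and marker
   transfer. *)
Lemma a_formula_rec n : a_formula (S n) = (S n - b_formula (a_formula n))%nat.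
Proof.
  destruct (classic (at_even_fib n)) as [[j Hn]|Hn].
  - assert (Ha : a_formula n = fib (2*j+1)).
    { unfold a_formula. rewrite ind_true by (exists j; exact Hn).
      apply gfloor_below_fib_even in Hn. lia. }
    assert (HaS : a_formula (S n) = fib (2*j+1)).
    { unfold a_formula. replace (S n) with (fib (2*j+2)) by lia.
      rewrite gfloor_fib_even, ind_false by apply not_at_even_fib_even. lia. }
    rewrite Ha, HaS, b_formula_fib_odd.
    rewrite (fib_sum (2*j) (2*j+1) (2*j+2)) in Hn by lia. lia.
  - unfold a_formula at 2. rewrite (ind_false _ Hn), Nat.add_0_r.
    unfold a_formula, b_formula.
    pose proof (ind_odd_le_gfloor (gfloor n)) as Hle.
    rewrite (ind_iff _ _ (odd_marker_transfer n Hn)) in Hle |- *.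
    pose proof (gfloor_rec n). lia.
Qed.

Theorem theorem8 : forall n : nat,
  Z.of_nat (hof_a n) = (Int_part ((INR n + 1) * alpha)%R + hof_eps1 n)%Z /\
  Z.of_nat (hof_b n) = (Int_part ((INR n + 1) * alpha)%R - hof_eps2 n)%Z.
Proof.
  intros n.
  destruct (married_unique a_formula b_formula a_formula_0 b_formula_0
              b_formula_rec a_formula_rec n) as [Ha Hb].
  rewrite Ha, Hb, Int_part_gfloor, hof_eps1_ind, hof_eps2_ind.
  unfold a_formula, b_formula. pose proof (ind_odd_le_gfloor n). lia.
Qed.
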